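(* Let $(V,g)$ be a real vector space of dimension $n\ge3$ with a non-degenerate scalar product $g$ (of arbitrary signature). Let $R\in\mathfrak{r}(V)$ with $R^*\in\mathfrak{r}(V)$. Then: (1) $\pi_8(R)=0=\pi_8(R^* )$; (2) $Ric(R)$ is symmetric if and only if $Ric^*(R)$ is symmetric.
   Context: $\mathfrak{r}(V)$ is the space of $(0,4)$-tensors $R$ with $R(x,y,z,w)=-R(y,x,z,w)$ and $R(x,y,z,w)+R(y,z,x,w)+R(z,x,y,w)=0$. The conjugate of a $(0,4)$-tensor is $R^*(x,y,z,w):=-R(x,y,w,z)$. With $\{e_i\}$ a basis, $g_{ij}=g(e_i,e_j)$ and $(g^{ij})$ the inverse matrix (summation convention), $Ric(R)(x,y):=g^{ij}R(e_i,x,y,e_j)$ and $Ric^*(R):=Ric(R^* )$. For bilinear forms $h,k$: $\Lambda h(x,y)=\tfrac12[h(x,y)-h(y,x)]$; $(h\cdot k)(x,y,z,w)=h(x,y)k(z,w)$; $(h\wedge_r k)(x,y,z,w)=h(x,z)k(y,w)-h(y,z)k(x,w)-r[h(x,w)k(y,z)-h(y,w)k(x,z)]$. Define $4\psi(R)(x,y,z,w)=R(x,y,z,w)+R(y,x,w,z)+R(z,w,x,y)+R(w,z,y,x)$ and $8\mu(R)(x,y,z,w)=3R(x,y,z,w)+3R(x,y,w,z)+R(x,w,z,y)+R(x,z,w,y)+R(w,y,z,x)+R(z,y,w,x)$. For $R\in\mathfrak{r}(V)$ put $\pi_8(R):=R-\psi(R)-\mu(R)+\tfrac{1}{2(n-2)}\Lambda(Ric(R)+Ric^*(R))\cdot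 g+\tfrac{1}{4(n-2)}\Lambda(Ric(R)+Ric^*(R))\wedge_3 g$. *)

(* V = 'rV[R]_n (a real vector space of dimension n),
   g given by its Gram matrix G in the standard basis e_i := delta_mx 0 i. *)
From HB Require Import structures.
From mathcomp Require Import all_boot all_order all_algebra.
From mathcomp Require Import reals.
Set Implicit Arguments. Unset Strict Implicit. Unset Printing Implicit Defensive.
Import Order.TTheory GRing.Theory Num.Theory.
Local Open Scope ring_scope.

Section Defs.
Variables (R : realType) (n : nat).
Local Notation V := 'rV[R]_n.

Definition tensor4 := V -> V -> V -> V -> R.
Definition bilin := V -> V -> R.

Definition ebasis (i : 'I_n) : V := delta_mx 0 i.

Definition gform (G : 'M[R]_n) : bilin := fun x y => (x *m G *m y^T) 0 0.

Definition multilinear4 (T : tensor4) : Prop :=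
  (forall a x x' y z w, T (a *: x + x') y z w = a * T x y z w + T x' y z w) /\
  (forall a x y y' z w, T x (a *: y + y') z w = a * T x y z w + T x y' z w) /\
  (forall a x y z z' w, T x y (a *: z + z') w = a * T x y z w + T x y z' w) /\
  (forall a x y z w w', T x y z (a *: w + w') = a * T x y z w + T x y z w').

Definition in_r (T : tensor4) : Prop :=
  multilinear4 T /\
  (forall x y z w, T x y z w = - T y x z w) /\
  (forall x y z w, T x y z w + T y z x w + T z x y w = 0).

Definition conjT (T : tensor4) : tensor4 := fun x y z w => - T x y w z.

Definition Ric (G : 'M[R]_n) (T : tensor4) : bilin :=
  fun x y => \sum_(i < n) \sum_(j < n) invmx G i j * T (ebasis i) x y (ebasis j).

Definition RicS (G : 'M[R]_n) (T : tensor4) : bilin := Ric G (conjT T).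

Definition symmetric_bilin (h : bilin) : Prop := forall x y, h x y = h y x.

Definition Lam (h : bilin) : bilin := fun x y => (h x y - h y x) / 2.

Definition dotb (h k : bilin) : tensor4 := fun x y z w => h x y * k z w.

Definition wedge (r : R) (h k : bilin) : tensor4 := fun x y z w =>
  h x z * k y w - h y z * k x w - r * (h x w * k y z - h y w * k x z).

Definition psiT (T : tensor4) : tensor4 := fun x y z w =>
  (T x y z w + T y x w z + T z w x y + T w z y x) / 4.

Definition muT (T : tensor4) : tensor4 := fun x y z w =>
  (3 * T x y z w + 3 * T x y w z + T x w z y + T x z w y
   + T w y z x + T z y w x) / 8.

Definition pi8 (G : 'M[R]_n) (T : tensor4) : tensor4 := fun x y z w =>
  let A := Lam (fun u v => Ric G T u v + RicS G T u v) in
  T x y z w - psiT T x y z w - muT T x y z w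
  + (2 * (n%:R - 2))^-1 * dotb A (gform G) x y z w
  + (4 * (n%:R - 2))^-1 * wedge 3 A (gform G) x y z w.

End Defs.

(* Split T into S := T + T^* (which is (x,y,z,w) |-> T x y z w - T x y w z)
   and P := T - T^*, so that T = (S + P) / 2.  Both satisfy the first Bianchi
   identity because T and T^* do; S is moreover skew in its last two slots,
   hence an algebraic curvature tensor, and P is symmetric in them.  On
   curvature tensors psi is the identity and mu vanishes, while on P psi
   vanishes and mu is the identity, so T - psi T - mu T = 0.  Finally
   Ric T + Ric^* T = Ric S is symmetric by the pair symmetry of S, which kills
   the correction terms of pi_8 and gives the equivalence in (2). *)
From HB Require Import structures.
From mathcomp Require Import all_boot all_order all_algebra.
From mathcomp Require Import reals.
From mathcomp Require Import lra.
Set Implicit Arguments. Unset Strict Implicit. Unset Printing Implicit Defensive.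
Import Order.TTheory GRing.Theory Num.Theory.
Local Open Scope ring_scope.

Section TensorSymmetries.
Variables (R : realType) (n : nat).
Local Notation tensor := (tensor4 R n).

Definition skew12 (T : tensor) := forall x y z w, T x y z w = - T y x z w.
Definition skew34 (T : tensor) := forall x y z w, T x y z w = - T x y w z.
Definition sym34 (T : tensor) := forall x y z w, T x y z w = T x y w z.
Definition bianchi (T : tensor) :=
  forall x y z w, T x y z w + T y z x w + T z x y w = 0.

Definition curv_part (T : tensor) : tensor :=
  fun x y z w => T x y z w + conjT T x y z w.
Definition sym_part (T : tensor) : tensor :=
  fun x y z w => T x y z w - conjT T x y z w.

Lemma conjTK (T : tensor) x y z w : conjT (conjT T) x y z w = T x y z w.
Proof. by rewrite /conjT opprK. Qed.

Lemma in_r_skew12 (T : tensor) : in_r T -> skew12 T.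
Proof. by case=> _ []. Qed.

Lemma in_r_bianchi (T : tensor) : in_r T -> bianchi T.
Proof. by case=> _ []. Qed.

Lemma bianchi_conjTK (T : tensor) : bianchi T -> bianchi (conjT (conjT T)).
Proof. by move=> bT x y z w; rewrite !conjTK. Qed.

Lemma pair_sym (T : tensor) : skew12 T -> skew34 T -> bianchi T ->
  forall x y z w, T x y z w = T z w x y.
Proof.
move=> sk12 sk34 bT x y z w.
(* Bianchi at (x,y,z,w) and (y,z,w,x) minus Bianchi at (z,w,x,y) and (w,x,y,z). *)
have := bT x y z w; have := bT y z w x; have := bT z w x y; have := bT w x y z.
have := sk34 y z w x; have := sk34 z w y x; have := sk34 w x z y.
have := sk34 x y w z; have := sk12 w y z x; have := sk34 y w z x.
have := sk12 x z w y; have := sk34 z x w y.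
lra.
Qed.

Section Decomposition.
Variable T : tensor.
Hypotheses (skT : skew12 T) (bT : bianchi T) (bTc : bianchi (conjT T)).

Lemma curv_part_skew12 : skew12 (curv_part T).
Proof.
move=> x y z w; have := skT x y z w; have := skT x y w z.
rewrite /curv_part /conjT; lra.
Qed.

Lemma curv_part_skew34 : skew34 (curv_part T).
Proof. by move=> x y z w; rewrite /curv_part /conjT; lra. Qed.

Lemma curv_part_bianchi : bianchi (curv_part T).
Proof.
move=> x y z w; have := bT x y z w; have := bTc x y z w.
rewrite /curv_part; lra.
Qed.

Lemma sym_part_skew12 : skew12 (sym_part T).
Proof.
move=> x y z w; have := skT x y z w; have := skT x y w z.
rewrite /sym_part /conjT; lra.
Qed.

Lemma sym_part_sym34 : sym34 (sym_part T).
Proof. by move=> x y z w; rewrite /sym_part /conjT; lra. Qed.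

Lemma sym_part_bianchi : bianchi (sym_part T).
Proof.
move=> x y z w; have := bT x y z w; have := bTc x y z w.
rewrite /sym_part; lra.
Qed.

End Decomposition.

Lemma psiT_split (T : tensor) x y z w :
  psiT T x y z w =
  (psiT (curv_part T) x y z w + psiT (sym_part T) x y z w) / 2.
Proof. rewrite /psiT /curv_part /sym_part; lra. Qed.

Lemma muT_split (T : tensor) x y z w :
  muT T x y z w = (muT (curv_part T) x y z w + muT (sym_part T) x y z w) / 2.
Proof. rewrite /muT /curv_part /sym_part; lra. Qed.

Section CurvatureTensor.
Variable S : tensor.
Hypotheses (sk12 : skew12 S) (sk34 : skew34 S) (bS : bianchi S).

Lemma psiT_curvature x y z w : psiT S x y z w = S x y z w.
Proof.
have := pair_sym sk12 sk34 bS x y z w.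
have := sk12 y x w z; have := sk34 x y w z; have := sk12 w z y x.
have := sk34 z w y x.
rewrite /psiT; lra.
Qed.

Lemma muT_curvature x y z w : muT S x y z w = 0.
Proof.
have := pair_sym sk12 sk34 bS w y z x; have := pair_sym sk12 sk34 bS z y w x.
have := sk34 x y z w; have := sk34 x w z y; have := sk12 z x w y.
have := sk12 w x z y.
rewrite /muT; lra.
Qed.

End CurvatureTensor.

Section Sym34Tensor.
Variable P : tensor.
Hypotheses (sk12 : skew12 P) (sy34 : sym34 P).

Lemma psiT_sym34 x y z w : psiT P x y z w = 0.
Proof.
have := sk12 y x w z; have := sy34 x y w z; have := sk12 w z y x.
have := sy34 z w y x.
rewrite /psiT; lra.
Qed.

Lemma muT_sym34 : bianchi P -> forall x y z w, muT P x y z w = P x y z w.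
Proof.
move=> bP x y z w.
have := bP x w y z; have := bP x z y w.
have := sk12 y x w z; have := sk12 y x z w.
have := sy34 x y z w; have := sy34 x w z y; have := sy34 x z w y.
have := sy34 w y z x; have := sy34 z y w x.
rewrite /muT; lra.
Qed.

End Sym34Tensor.

Lemma sub_psiT_muT_eq0 (T : tensor) :
  skew12 T -> bianchi T -> bianchi (conjT T) ->
  forall x y z w, T x y z w - psiT T x y z w - muT T x y z w = 0.
Proof.
move=> skT bT bTc x y z w.
have skS := curv_part_skew12 skT; have skS34 := curv_part_skew34 T.
have bS := curv_part_bianchi bT bTc.
have skP := sym_part_skew12 skT; have syP := sym_part_sym34 T.
have bP := sym_part_bianchi bT bTc.
rewrite psiT_split muT_split psiT_curvature // muT_curvature //.
rewrite psiT_sym34 // muT_sym34 // /curv_part /sym_part; lra.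
Qed.

End TensorSymmetries.

Section Ricci.
Variables (R : realType) (n : nat) (G : 'M[R]_n).
Hypothesis G_sym : G^T = G.
Local Notation tensor := (tensor4 R n).

Lemma invmx_sym i j : invmx G i j = invmx G j i.
Proof. by rewrite -[in RHS]G_sym -trmx_inv mxE. Qed.

Lemma Ric_curv_part (T : tensor) x y :
  Ric G T x y + RicS G T x y = Ric G (curv_part T) x y.
Proof.
rewrite /RicS /Ric -big_split; apply: eq_bigr => i _.
by rewrite -big_split; apply: eq_bigr => j _; rewrite /curv_part mulrDr.
Qed.

Lemma Ric_curvature_sym (S : tensor) :
  skew12 S -> skew34 S -> bianchi S -> symmetric_bilin (Ric G S).
Proof.
move=> sk12 sk34 bS x y; rewrite /Ric exchange_big.
apply: eq_bigr => i _; apply: eq_bigr => j _.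
rewrite invmx_sym pair_sym // sk12 sk34; lra.
Qed.

Lemma Ric_add_RicD_sym (T : tensor) :
  skew12 T -> bianchi T -> bianchi (conjT T) ->
  symmetric_bilin (fun x y => Ric G T x y + RicS G T x y).
Proof.
move=> skT bT bTc x y; rewrite !Ric_curv_part.
apply: Ric_curvature_sym.
- exact: curv_part_skew12.
- exact: curv_part_skew34.
- exact: curv_part_bianchi.
Qed.

Lemma pi8_eq0 (T : tensor) :
  skew12 T -> bianchi T -> bianchi (conjT T) ->
  forall x y z w, pi8 G T x y z w = 0.
Proof.
move=> skT bT bTc x y z w.
have RicD_sym := Ric_add_RicD_sym skT bT bTc.
rewrite /pi8 /dotb /wedge /Lam !(RicD_sym _ x) !(RicD_sym _ y) subrr mul0r.
rewrite sub_psiT_muT_eq0 //; lra.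
Qed.

End Ricci.

Theorem lemma4p9 (R : realType) (n : nat) (G : 'M[R]_n) (T : tensor4 R n) :
  (2 < n)%N -> G^T = G -> G \in unitmx ->
  in_r T -> in_r (conjT T) ->
  ((forall x y z w, pi8 G T x y z w = 0) /\
   (forall x y z w, pi8 G (conjT T) x y z w = 0)) /\
  (symmetric_bilin (Ric G T) <-> symmetric_bilin (RicS G T)).
Proof.
move=> _ G_sym _ rT rTc.
have skT := in_r_skew12 rT; have bT := in_r_bianchi rT.
have skTc := in_r_skew12 rTc; have bTc := in_r_bianchi rTc.
split; first split.
- exact: pi8_eq0.
- exact: pi8_eq0 (bianchi_conjTK bT).
- have RicD_sym := Ric_add_RicD_sym G_sym skT bT bTc.
  by split=> h x y; have := RicD_sym x y; rewrite h => e; lra.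
Qed.
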